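(* For every finite simple graph $H$: (i) $\rho(H)\le\rho_R(H)$. (ii) If $H'$ is obtained from $H$ by removing some edges (keeping all vertices), then $\rho_R(H')\ge\rho_R(H)$. (iii) If $H$ is the union of two vertex-disjoint graphs $H_1$ and $H_2$ together with possibly some additional edges between $V(H_1)$ and $V(H_2)$, and $m(H_1,H_2)$ denotes the number of pairs $(u,v)$ with $u\in V(H_1)$, $v\in V(H_2)$, $uv\notin E(H)$, then $$\rho_R(H_1)+\rho_R(H_2)\le\rho_R(H)\le\rho_R(H_1)+\rho_R(H_2)+m(H_1,H_2).$$
   Context: All graphs are finite and simple. A coloring means a proper vertex coloring; an induced subgraph is rainbow if all its vertices have pairwise different colors. $\rho(H)$ is the least number $m$ such that some graph $G$ on $m$ vertices has the property that every proper vertex coloring of $G$ contains a rainbow induced subgraph isomorphic to $H$. If $V(H)=\{h_1,\ldots,h_n\}$, a replication graph of $H$ is a graph $G$ obtained by replacing each vertex $h_i$ by a clique $K_i$ with $|K_i|\ge1$ (cliques pairwise vertex-disjoint), where two vertices in different cliques $K_i,K_j$ are adjacent iff $h_ih_j\in E(H)$. $\rho_R(H)$ is the minimum order of a replication graph $G$ of $H$ such that every proper vertex coloring of $G$ admits a choice of exactly one vertex from each clique $K_i$ with all chosen vertices of pairwise different colors (such a choice induces a rainbow copy of $H$). *)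

From Stdlib Require Import ClassicalEpsilon.
From mathcomp Require Import all_boot.
Set Implicit Arguments. Unset Strict Implicit. Unset Printing Implicit Defensive.

Definition simple_graph (V : finType) (e : rel V) : Prop :=
  symmetric e /\ irreflexive e.

Definition proper_coloring (V : finType) (e : rel V) (c : V -> nat) : Prop :=
  forall x y, e x y -> c x <> c y.

(* The least natural number satisfying P (0 if there is none; in our uses
   such numbers always exist). *)
Definition decb (P : Prop) : bool :=
  if excluded_middle_informative P then true else false.

Lemma decbP (P : Prop) : decb P = true <-> P.
Proof. rewrite /decb; case: excluded_middle_informative => //. Qed.

Lemma ex_decb (P : nat -> Prop) : (exists n, P n) -> exists n, decb (P n).
Proof. by case=> n Hn; exists n; apply/decbP. Qed.

Definition least_nat (P : nat -> Prop) : nat :=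
  match excluded_middle_informative (exists n, P n) with
  | left ex => ex_minn (ex_decb ex)
  | right _ => 0
  end.

Definition rainbow_forcing (V : finType) (eH : rel V) (m : nat) (eG : rel 'I_m) : Prop :=
  forall c : 'I_m -> nat, proper_coloring eG c ->
    exists f : V -> 'I_m,
      (forall u v, eG (f u) (f v) = eH u v) /\ injective (fun v => c (f v)).

Definition rho_prop (V : finType) (eH : rel V) (m : nat) : Prop :=
  exists eG : rel 'I_m, simple_graph eG /\ rainbow_forcing eH eG.

Definition rho (V : finType) (eH : rel V) : nat := least_nat (rho_prop eH).

(* Replication graph of H with clique sizes k : V -> nat; vertex (i, a)
   is the a-th vertex of the clique K_i. *)
Definition repl_vertex (V : finType) (k : V -> nat) : finType :=
  {i : V & 'I_(k i)}.

Definition repl_adj (V : finType) (eH : rel V) (k : V -> nat) : rel (repl_vertex k) :=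
  fun x y => if projT1 x == projT1 y then x != y else eH (projT1 x) (projT1 y).
Arguments repl_adj {V} eH k.

Definition repl_good (V : finType) (eH : rel V) (k : V -> nat) : Prop :=
  forall c : repl_vertex k -> nat, proper_coloring (repl_adj eH k) c ->
    exists s : forall i : V, 'I_(k i),
      injective (fun i => c (existT (fun j => 'I_(k j)) i (s i))).

Definition rhoR_prop (V : finType) (eH : rel V) (m : nat) : Prop :=
  exists k : V -> nat,
    (forall i, 0 < k i) /\ \sum_(i : V) k i = m /\ repl_good eH k.

Definition rhoR (V : finType) (eH : rel V) : nat := least_nat (rhoR_prop eH).

Definition left_part (V1 V2 : finType) (e : rel (V1 + V2)%type) : rel V1 :=
  fun x y => e (inl x) (inl y).
Definition right_part (V1 V2 : finType) (e : rel (V1 + V2)%type) : rel V2 :=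
  fun x y => e (inr x) (inr y).

Definition nonadj_cross (V1 V2 : finType) (e : rel (V1 + V2)%type) : nat :=
  #|[set p : V1 * V2 | ~~ e (inl p.1) (inr p.2)]|.

From Stdlib Require Import ClassicalEpsilon.
From mathcomp Require Import all_boot.
Set Implicit Arguments. Unset Strict Implicit. Unset Printing Implicit Defensive.

(* A good replication graph is itself a witness for rho: a rainbow transversal
   induces a copy of H.  Deleting edges of H deletes edges of its replication
   graphs, so more colorings are proper and goodness passes from H' to H.
   Restricting a good replication graph of H to the cliques of H1 gives a good
   one for H1, since a proper coloring of the part extends to the whole graph
   by fresh colors.  Conversely, glue optimal replications of H1 and H2 and
   enlarge the clique of u in H1 by the number of its non-neighbours in H2:
   after choosing a rainbow transversal of the H2 part, every clique of H1
   keeps k1(u) vertices whose colors avoid those chosen at non-neighbours,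
   while colors at neighbours differ by properness. *)

Lemma least_nat_le (P : nat -> Prop) n : P n -> least_nat P <= n.
Proof.
move=> Pn; rewrite /least_nat; case: excluded_middle_informative => [ex|[]]; last by exists n.
by case: ex_minnP => m _; apply; apply/decbP.
Qed.

Lemma least_natP (P : nat -> Prop) : (exists n, P n) -> P (least_nat P).
Proof.
move=> ex_P; rewrite /least_nat; case: excluded_middle_informative => [ex|//].
by case: ex_minnP => m /decbP.
Qed.

Lemma card_mem_preim_le (T : finType) (U : eqType) (f : T -> U) (s : seq U) :
  injective f -> #|[pred a | f a \in s]| <= size s.
Proof.
move=> f_inj; rewrite cardE -(size_map f).
apply: uniq_leq_size; first by rewrite (map_inj_uniq f_inj) enum_uniq.
by move=> y /mapP[a]; rewrite mem_enum inE => fa_s ->.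
Qed.

Lemma exists_inj_avoid (T : finType) (U : eqType) (f : T -> U) (s : seq U) n :
  injective f -> n + size s <= #|T| ->
  exists2 h : 'I_n -> T, injective h & forall a, f (h a) \notin s.
Proof.
move=> f_inj n_small; pose A := [pred a | f a \notin s].
have n_le : n <= #|A|.
  have <- : #|[predC [pred a | f a \in s]]| = #|A| by apply: eq_card.
  rewrite -(leq_add2l #|[pred a | f a \in s]|) cardC.
  by apply: leq_trans n_small; rewrite addnC leq_add2l card_mem_preim_le.
exists (fun a => enum_val (widen_ord n_le a)) => [a b /enum_val_inj/(congr1 val) ab|a].
  exact: val_inj.
exact: (enum_valP (widen_ord n_le a)).
Qed.

Lemma exists_injective_transversal (I : finType) (k : I -> nat)
    (g : forall i, 'I_(k i) -> nat) :
  (forall i, injective (g i)) -> (forall i, #|I| <= k i) ->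
  exists s : forall i, 'I_(k i), injective (fun i => g i (s i)).
Proof.
move=> g_inj k_large.
suff [s s_uniq] : exists s : forall i, 'I_(k i), uniq [seq g i (s i) | i <- enum I].
  by exists s; apply/injectiveP.
have k_pos i : 0 < k i by apply: leq_trans (k_large i); apply/card_gt0P; exists i.
have : uniq (enum I) by exact: enum_uniq.
elim: (enum I) => [|x r IHr xr_uniq]; first by exists (fun i => Ordinal (k_pos i)).
have /andP[x_r r_uniq] := xr_uniq; have [s s_uniq] := IHr r_uniq.
have r_small : size r < #|I|.
  by move/card_uniqP: xr_uniq => /= <-; exact: max_card.
have room : 1 + size [seq g i (s i) | i <- r] <= #|'I_(k x)|.
  by rewrite card_ord size_map add1n (leq_trans r_small).
have [new _ new_fresh] := exists_inj_avoid (g_inj x) room.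
exists (dfwith s (new ord0)); rewrite /= dfwith_in.
have -> : [seq g i (dfwith s (new ord0) i) | i <- r] = [seq g i (s i) | i <- r].
  by apply/eq_in_map => i ir; rewrite dfwith_out //; apply: contraNneq x_r => ->.
by rewrite new_fresh.
Qed.

Section Replication.
Variables (V : finType) (e : rel V).

Lemma existT_repl_inj (k : V -> nat) i : injective (existT (fun j => 'I_(k j)) i).
Proof. by move=> a b /eqP; rewrite eq_Tagged => /eqP. Qed.

Lemma repl_adj_irr k : irreflexive (repl_adj e k).
Proof. by move=> x; rewrite /repl_adj !eqxx. Qed.

Lemma repl_adj_sym k : symmetric e -> symmetric (repl_adj e k).
Proof. by move=> e_sym x y; rewrite /repl_adj [y == x]eq_sym [projT1 y == _]eq_sym e_sym. Qed.

Lemma repl_adj_transversal k (s : forall i, 'I_(k i)) :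
  irreflexive e -> forall i j,
  repl_adj e k (existT _ i (s i)) (existT _ j (s j)) = e i j.
Proof.
move=> e_irr i j; rewrite /repl_adj /=.
by case: (eqVneq i j) => [<-|//]; rewrite eqxx e_irr.
Qed.

Lemma proper_coloring_clique_inj k c i :
  proper_coloring (repl_adj e k) c ->
  injective (fun a : 'I_(k i) => c (existT _ i a)).
Proof.
move=> c_proper a b cab; apply/eqP/negPn/negP => ab.
apply: c_proper cab; rewrite /repl_adj /= eqxx.
by apply: contra ab => /eqP/existT_repl_inj ->.
Qed.

Lemma repl_good_subrel (e' : rel V) k :
  subrel e' e -> repl_good e' k -> repl_good e k.
Proof.
move=> e'e good c c_proper; apply: good => x y xy; apply: c_proper; move: xy.
by rewrite /repl_adj; case: ifP => // _; apply: e'e.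
Qed.

Lemma repl_good_large : repl_good e (fun _ => #|V|).
Proof.
move=> c c_proper.
apply: (exists_injective_transversal (g := fun i a => c (existT _ i a))) => // i.
exact: proper_coloring_clique_inj c_proper.
Qed.

Lemma rhoR_le m : rhoR_prop e m -> rhoR e <= m.
Proof. exact: least_nat_le. Qed.

Lemma rhoRP : rhoR_prop e (rhoR e).
Proof.
apply: (@least_natP (rhoR_prop e)); exists (\sum_(i : V) #|V|), (fun _ => #|V|).
split; last by split; last exact: repl_good_large.
by move=> i; apply/card_gt0P; exists i.
Qed.

End Replication.

Lemma proper_coloring_extend (X Y : finType) (eX : rel X) (eY : rel Y) (L : X -> Y)
    (c' : X -> nat) :
  injective L -> irreflexive eY -> (forall x y, eY (L x) (L y) = eX x y) ->
  proper_coloring eX c' ->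
  exists2 c, proper_coloring eY c & forall x, c (L x) = c' x.
Proof.
move=> L_inj eY_irr eY_L c'_proper.
pose N := (\max_x c' x).+1.
pose c y := if [pick x | L x == y] is Some x then c' x else N + enum_rank y.
have cL x : c (L x) = c' x.
  rewrite /c; case: pickP => [x' /eqP/L_inj -> //|/(_ x)].
  by rewrite eqxx.
have c_out y : (exists x, y = L x) \/ c y = N + enum_rank y.
  by rewrite /c; case: pickP => [x /eqP <-|_]; [left; exists x | right].
have c'_lt x : c' x < N by rewrite ltnS leq_bigmax.
exists c => // y z.
case: (c_out y) => [[x ->]|->]; case: (c_out z) => [[x' ->]|->].
- by rewrite eY_L !cL; apply: c'_proper.
- by rewrite cL => _ cx; move: (c'_lt x); rewrite cx ltnNge leq_addr.
- by rewrite cL => _ cx; move: (c'_lt x'); rewrite -cx ltnNge leq_addr.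
- move=> yz /eqP; rewrite eqn_add2l => /eqP/val_inj/enum_rank_inj yz_eq.
  by move: yz; rewrite yz_eq eY_irr.
Qed.

Section ReplEmbedding.
Variables (V W : finType) (e : rel V) (eW : rel W) (phi : W -> V).
Variables (k : V -> nat) (k' : W -> nat) (h : forall u, 'I_(k' u) -> 'I_(k (phi u))).
Hypotheses (phi_inj : injective phi) (h_inj : forall u, injective (@h u)).
Hypothesis eW_phi : forall u u', eW u u' = e (phi u) (phi u').

Definition repl_map (x : repl_vertex k') : repl_vertex k :=
  existT (fun i => 'I_(k i)) (phi (tag x)) (h (tagged x)).

Lemma repl_map_inj : injective repl_map.
Proof.
move=> [u a] [u' a'] /= eq_im.
have eq_u : u = u' by apply: phi_inj; exact: (f_equal tag eq_im).
subst u'.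
by rewrite (h_inj (existT_repl_inj eq_im) : a = a').
Qed.

Lemma repl_adj_map x y : repl_adj e k (repl_map x) (repl_map y) = repl_adj eW k' x y.
Proof. by rewrite /repl_adj /= (inj_eq phi_inj) (inj_eq repl_map_inj) eW_phi. Qed.

Lemma proper_coloring_repl_map c :
  proper_coloring (repl_adj e k) c ->
  proper_coloring (repl_adj eW k') (fun x => c (repl_map x)).
Proof. by move=> c_proper x y; rewrite -repl_adj_map; apply: c_proper. Qed.

End ReplEmbedding.

Lemma repl_good_induced (V W : finType) (e : rel V) (eW : rel W) (phi : W -> V)
    (k : V -> nat) :
  injective phi -> (forall u u', eW u u' = e (phi u) (phi u')) ->
  repl_good e k -> repl_good eW (fun u => k (phi u)).
Proof.
move=> phi_inj eW_phi good c' c'_proper.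
pose h u : 'I_(k (phi u)) -> 'I_(k (phi u)) := id.
have h_inj u : injective (h u) by [].
have [c c_proper cL] := proper_coloring_extend (repl_map_inj phi_inj h_inj)
  (@repl_adj_irr _ e k) (repl_adj_map phi_inj h_inj eW_phi) c'_proper.
have [s s_inj] := good c c_proper.
by exists (fun u => s (phi u)) => u u'; rewrite /= -!cL => /s_inj/phi_inj.
Qed.

Lemma card_repl_vertex (V : finType) (k : V -> nat) : #|{: repl_vertex k}| = \sum_i k i.
Proof.
rewrite card_tagged sumnE big_map big_enum /=.
by apply: eq_bigr => i _; rewrite card_ord.
Qed.

Lemma rho_le_rhoR (V : finType) (e : rel V) : simple_graph e -> rho e <= rhoR e.
Proof.
move=> [e_sym e_irr]; have [k [_ [k_sum k_good]]] := rhoRP e.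
have card_k : #|{: repl_vertex k}| = rhoR e by rewrite card_repl_vertex.
pose enc (x : repl_vertex k) : 'I_(rhoR e) := cast_ord card_k (enum_rank x).
pose dec (i : 'I_(rhoR e)) : repl_vertex k := enum_val (cast_ord (esym card_k) i).
have encK : cancel enc dec by move=> x; rewrite /dec /enc cast_ordK enum_rankK.
apply: least_nat_le; exists (fun i j => repl_adj e k (dec i) (dec j)); split.
  by split=> [i j|i]; [apply: repl_adj_sym | apply: repl_adj_irr].
move=> c c_proper.
have [|s s_inj] := k_good (fun x => c (enc x)).
  by move=> x y xy; apply: c_proper; rewrite !encK.
exists (fun i => enc (existT _ i (s i))); split => [i j|i j /s_inj //].
by rewrite !encK repl_adj_transversal.
Qed.

Lemma rhoR_le_subgraph (V : finType) (e e' : rel V) : subrel e' e -> rhoR e <= rhoR e'.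
Proof.
move=> e'e; have [k [k_pos [k_sum k_good]]] := rhoRP e'.
by apply: rhoR_le; exists k; split; last split; last exact: repl_good_subrel k_good.
Qed.

Lemma rhoR_join_ge (V1 V2 : finType) (e : rel (V1 + V2)%type) :
  rhoR (left_part e) + rhoR (right_part e) <= rhoR e.
Proof.
have [k [k_pos [<- k_good]]] := rhoRP e; rewrite big_sumType leq_add //.
- apply: rhoR_le; exists (fun u => k (inl u)); split=> //; split=> //.
  by apply: repl_good_induced k_good => // u v [].
- apply: rhoR_le; exists (fun u => k (inr u)); split=> //; split=> //.
  by apply: repl_good_induced k_good => // u v [].
Qed.

Section Join.
Variables (V1 V2 : finType) (e : rel (V1 + V2)%type) (k1 : V1 -> nat) (k2 : V2 -> nat).

Definition cross_nonnbrs (u : V1) : {set V2} := [set v | ~~ e (inl u) (inr v)].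

Definition join_sizes (i : V1 + V2) : nat :=
  match i with inl u => k1 u + #|cross_nonnbrs u| | inr v => k2 v end.

Lemma sum_cross_nonnbrs : \sum_u #|cross_nonnbrs u| = nonadj_cross e.
Proof.
transitivity (\sum_u \sum_(v | ~~ e (inl u) (inr v)) 1).
  by apply: eq_bigr => u _; rewrite -sum1_card; apply: eq_bigl => v; rewrite inE.
by rewrite pair_big_dep /nonadj_cross -sum1_card; apply: eq_bigl => -[u v]; rewrite inE.
Qed.

Lemma sum_join_sizes :
  \sum_i join_sizes i = \sum_u k1 u + \sum_v k2 v + nonadj_cross e.
Proof. by rewrite big_sumType big_split -sum_cross_nonnbrs addnAC. Qed.

Lemma repl_good_join :
  repl_good (left_part e) k1 -> repl_good (right_part e) k2 -> repl_good e join_sizes.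
Proof.
move=> good1 good2 c c_proper.
pose vtx i (a : 'I_(join_sizes i)) := existT (fun j => 'I_(join_sizes j)) i a.
have inl_inj : injective (@inl V1 V2) by move=> ? ? [].
have inr_inj : injective (@inr V1 V2) by move=> ? ? [].
have [s2 s2_inj] := good2 _ (proper_coloring_repl_map (phi := inr) (h := fun v => id)
  inr_inj (fun _ _ _ => id) (fun _ _ => erefl) c_proper).
pose col v := c (vtx (inr v) (s2 v)).
have /fin_all_exists2[h h_inj h_avoid] u :
    exists2 hu : 'I_(k1 u) -> 'I_(join_sizes (inl u)), injective hu &
    forall a, c (vtx (inl u) (hu a)) \notin [seq col v | v in cross_nonnbrs u].
  apply: (exists_inj_avoid (f := fun a => c (vtx (inl u) a))).
    exact: proper_coloring_clique_inj c_proper.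
  by rewrite size_image card_ord.
have [s1 s1_inj] := good1 _ (proper_coloring_repl_map
  inl_inj h_inj (fun _ _ => erefl) c_proper).
have cross u v : c (vtx (inl u) (h u (s1 u))) != col v.
  case: (boolP (e (inl u) (inr v))) => [uv|not_uv].
    by apply/eqP; apply: c_proper; rewrite /repl_adj.
  apply: contraNneq (h_avoid u (s1 u)) => ->.
  by apply: image_f; rewrite inE.
exists (fun i => match i as i return 'I_(join_sizes i) with
                 | inl u => h u (s1 u) | inr v => s2 v end).
case=> [u|v] [u'|v'] /= c_eq.
- by rewrite (s1_inj u u' c_eq).
- by move: (cross u v'); rewrite c_eq eqxx.
- by move: (cross u' v); rewrite -c_eq eqxx.
- by rewrite (s2_inj v v' c_eq).
Qed.

End Join.

Lemma rhoR_join_le (V1 V2 : finType) (e : rel (V1 + V2)%type) :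
  rhoR e <= rhoR (left_part e) + rhoR (right_part e) + nonadj_cross e.
Proof.
have [k1 [k1_pos [<- k1_good]]] := rhoRP (left_part e).
have [k2 [k2_pos [<- k2_good]]] := rhoRP (right_part e).
apply: rhoR_le; exists (join_sizes e k1 k2); split; last split.
- by case=> [u|v] /=; [rewrite ltn_addr | ].
- exact: sum_join_sizes.
- exact: repl_good_join.
Qed.

Theorem theorem4p1 :
  (forall (V : finType) (e : rel V), simple_graph e -> rho e <= rhoR e)
  /\
  (forall (V : finType) (e e' : rel V), simple_graph e -> simple_graph e' ->
     (forall x y, e' x y -> e x y) -> rhoR e <= rhoR e')
  /\
  (forall (V1 V2 : finType) (e : rel (V1 + V2)%type), simple_graph e ->
     rhoR (left_part e) + rhoR (right_part e) <= rhoR e /\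
     rhoR e <= rhoR (left_part e) + rhoR (right_part e) + nonadj_cross e).
Proof.
split; first exact: rho_le_rhoR.
split; first by move=> V e e' _ _; exact: rhoR_le_subgraph.
by move=> V1 V2 e _; split; [exact: rhoR_join_ge | exact: rhoR_join_le].
Qed.
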